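(* Let $k\ge 2$ and let $\mathcal{C}$ be the full flag code on $\mathbb{F}_q^{2k}$ constructed from a $k$-spread as described in the context. Let $\mathcal{F}=(\mathcal{F}_1,\ldots,\mathcal{F}_{2k-1})\in\mathcal{C}$ and let $\mathcal{X}=(\mathcal{X}_1,\ldots,\mathcal{X}_{2k-1})$ be a sequence of subspaces with $\mathcal{X}_i\subseteq\mathcal{F}_i$ for all $i$. If there exists $i\in\{1,\ldots,k\}$ with $\mathcal{X}_i\ne\{0\}$, then $\mathcal{F}$ is the unique flag $\mathcal{G}=(\mathcal{G}_1,\ldots,\mathcal{G}_{2k-1})\in\mathcal{C}$ with $\mathcal{X}_i\subseteq\mathcal{G}_i$.
   Context: $q$ is a prime power. Construction: let $\{\mathcal{S}_1,\ldots,\mathcal{S}_{q^k+1}\}$ be a $k$-spread of $\mathbb{F}_q^{2k}$ (a set of $q^k+1$ $k$-dimensional subspaces pairwise intersecting trivially), with full-rank $k\times 2k$ generator matrices $\mathrm{S}_i$ (row space $\mathcal{S}_i$). Let $\mathrm{W}_i=\begin{pmatrix}\mathrm{S}_i\\ \mathrm{S}_{i+1}\end{pmatrix}$ for $i\le q^k$ and $\mathrm{W}_{q^k+1}=\begin{pmatrix}\mathrm{S}_{q^k+1}\\ \mathrm{S}_1\end{pmatrix}$, let $\mathcal{W}_i^{(j)}$ be the row space of the first $j$ rows of $\mathrm{W}_i$, and $\mathcal{C}=\{(\mathcal{W}_i^{(1)},\ldots,\mathcal{W}_i^{(2k-1)}): 1\le i\le q^k+1\}$. *)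

(* Subspaces of F^(2k) are represented by matrices over F
   (row spaces), with inclusion (A <= B)%MS and canonical representatives
   <<A>>%MS. *)
From HB Require Import structures.
From mathcomp Require Import all_boot all_order all_algebra all_field.
Set Implicit Arguments. Unset Strict Implicit. Unset Printing Implicit Defensive.
Import GRing.Theory.
Local Open Scope ring_scope.

(* A k-spread of F^(2k) given by generator matrices S_i (k x 2k), indexed by
   'I_(q^k+1) with q = #|F|: each S_i is full rank (so its row space has
   dimension k) and the row spaces pairwise intersect trivially. *)
Definition is_spread_gen (F : finFieldType) (k : nat)
    (S : 'I_(#|F| ^ k).+1 -> 'M[F]_(k, k + k)) : Prop :=
  (forall i, row_free (S i)) /\
  (forall i j, i != j -> (S i :&: S j)%MS = 0 :> 'M[F]_(k + k)).

(* W_i = (S_i ; S_(i+1)), cyclically (W_(q^k+1) = (S_(q^k+1) ; S_1)). *)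
Definition Wmx (F : finFieldType) (k : nat)
    (S : 'I_(#|F| ^ k).+1 -> 'M[F]_(k, k + k)) (i : 'I_(#|F| ^ k).+1)
    : 'M[F]_(k + k, k + k) :=
  col_mx (S i) (S (ordS i)).

(* W_i^(j): the row space of the first j rows of W_i (the other rows are
   zeroed out by the partial identity pid_mx j), as a canonical subspace. *)
Definition flagW (F : finFieldType) (k : nat)
    (S : 'I_(#|F| ^ k).+1 -> 'M[F]_(k, k + k)) (i : 'I_(#|F| ^ k).+1)
    (j : nat) : 'M[F]_(k + k) :=
  (<< (pid_mx j : 'M[F]_(k + k)) *m Wmx S i >>)%MS.

(* Every flag of the code starts inside one spread element: its first k
   subspaces lie in S_i.  A nonzero X_j with j <= k therefore lies in both
   S_i and S_i0, which meet trivially unless i = i0, so the flag is F. *)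
From mathcomp Require Import all_boot all_order all_algebra all_field zify.
Set Implicit Arguments. Unset Strict Implicit. Unset Printing Implicit Defensive.
Local Open Scope ring_scope.
Import GRing.Theory.

Lemma pid_mx_col_mx_sub (K : fieldType) (m1 m2 n j : nat)
    (A : 'M[K]_(m1, n)) (B : 'M[K]_(m2, n)) :
  (j <= m1)%N -> ((pid_mx j : 'M_(m1 + m2)) *m col_mx A B <= A)%MS.
Proof.
move=> le_j_m1.
have -> : (pid_mx j : 'M[K]_(m1 + m2)) = pid_mx j *m (pid_mx m1 : 'M_(m1 + m2)).
  rewrite mul_pid_mx (minn_idPl le_j_m1).
  by rewrite (minn_idPr (leq_trans le_j_m1 (leq_addr _ _))).
rewrite -mulmxA pid_mx_block mul_block_col !mul0mx mul1mx !addr0.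
by apply: submx_trans (submxMl _ _) _; rewrite col_mx_sub submx_refl sub0mx.
Qed.

Lemma flagW_sub_spread (F : finFieldType) (k : nat)
    (S : 'I_(#|F| ^ k).+1 -> 'M[F]_(k, k + k)) i j :
  (j <= k)%N -> (flagW S i j <= S i)%MS.
Proof. by move=> le_j_k; rewrite /flagW genmxE pid_mx_col_mx_sub. Qed.

Lemma spread_index_eq (F : finFieldType) (k : nat)
    (S : 'I_(#|F| ^ k).+1 -> 'M[F]_(k, k + k)) (i i' : 'I_(#|F| ^ k).+1)
    (Y : 'M[F]_(k + k)) :
  is_spread_gen S -> Y != 0 -> (Y <= S i)%MS -> (Y <= S i')%MS -> i = i'.
Proof.
case=> _ trivial_cap nzY subYi subYi'; apply/eqP; apply: contraNT nzY => neq_ii'.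
by rewrite -submx0 -(trivial_cap _ _ neq_ii') sub_capmx subYi subYi'.
Qed.

Theorem proposition4p11 (F : finFieldType) (k : nat) (hk : (2 <= k)%N)
    (S : 'I_(#|F| ^ k).+1 -> 'M[F]_(k, k + k))
    (hS : is_spread_gen S)
    (i0 : 'I_(#|F| ^ k).+1) (X : nat -> 'M[F]_(k + k))
    (hX : forall j, (1 <= j <= (k + k).-1)%N -> (X j <= flagW S i0 j)%MS)
    (hnz : exists2 j, (1 <= j <= k)%N & X j != 0) :
  forall i : 'I_(#|F| ^ k).+1,
    (forall j, (1 <= j <= (k + k).-1)%N -> (X j <= flagW S i j)%MS) ->
    forall j, (1 <= j <= (k + k).-1)%N -> flagW S i j = flagW S i0 j.
Proof.
move=> i hXi j _.
have [l /andP[l_gt0 l_le_k] nzXl] := hnz.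
have l_in_range : (1 <= l <= (k + k).-1)%N by apply/andP; split; lia.
suff -> : i = i0 by [].
apply: (spread_index_eq hS nzXl).
- exact: submx_trans (hXi l l_in_range) (flagW_sub_spread _ _ l_le_k).
- exact: submx_trans (hX l l_in_range) (flagW_sub_spread _ _ l_le_k).
Qed.
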